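(* Let $(C,D)$ define an irreducible MSPP (a MAP with $C$ diagonal). Then the squared coefficient of variation of the event-stationary inter-event time satisfies $c^2\ge 1$; equivalently $\boldsymbol{\pi}C\mathbf{1}\,\boldsymbol{\pi}C^{-1}\mathbf{1}\ge 1$.
   Context: A Markovian arrival process (MAP) of order $p$ is specified by $p\times p$ real matrices $C$ and $D$ such that $D$ has nonnegative entries, $C$ has nonnegative off-diagonal entries, and $Q=C+D$ is the generator (row sums zero) of an irreducible continuous-time Markov chain on $\{1,\dots,p\}$; $C$ is assumed nonsingular. An MSPP is a MAP with $C$ diagonal. $\mathbf{1}$ is the all-ones column vector; $\boldsymbol{\pi}$ is the stationary distribution of $Q$; $\boldsymbol{\alpha}$ is the stationary distribution of $P=(-C)^{-1}D$. The event-stationary inter-event time $T_1^{\alpha}$ has $\mathbb{P}(T_1^{\alpha}>t)=\boldsymbol{\alpha}e^{Ct}\mathbf{1}$, and $c^2=\mathrm{Var}(T_1^{\alpha})/\mathbb{E}^2[T_1^{\alpha}]$, which satisfies $c^2+1=2\,\boldsymbol{\pi}C\mathbf{1}\,\boldsymbol{\pi}C^{-1}\mathbf{1}$. *)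

From HB Require Import structures.
From mathcomp Require Import all_boot all_order all_algebra.
Set Implicit Arguments. Unset Strict Implicit. Unset Printing Implicit Defensive.
Import Order.TTheory GRing.Theory Num.Theory.
Local Open Scope ring_scope.

Definition ones (R : realFieldType) (p : nat) : 'cV[R]_p := const_mx 1.

Definition is_generator (R : realFieldType) (p : nat) (Q : 'M[R]_p) : Prop :=
  (forall i j : 'I_p, i != j -> 0 <= Q i j) /\
  (forall i : 'I_p, \sum_(j < p) Q i j = 0).

Definition irreducible_gen (R : realFieldType) (p : nat) (Q : 'M[R]_p) : Prop :=
  forall i j : 'I_p, connect [rel a b : 'I_p | (a != b) && (0 < Q a b)] i j.

Definition is_irreducible_MAP (R : realFieldType) (p : nat) (C D : 'M[R]_p) : Prop :=
  [/\ forall i j : 'I_p, 0 <= D i j,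
      forall i j : 'I_p, i != j -> 0 <= C i j,
      is_generator (C + D),
      irreducible_gen (C + D) &
      C \in unitmx].

Definition is_irreducible_MSPP (R : realFieldType) (p : nat) (C D : 'M[R]_p) : Prop :=
  is_irreducible_MAP C D /\ is_diag_mx C.

Definition is_stationary_dist (R : realFieldType) (p : nat) (Q : 'M[R]_p)
  (pi : 'rV[R]_p) : Prop :=
  [/\ forall i : 'I_p, 0 <= pi 0 i, \sum_(i < p) pi 0 i = 1 & pi *m Q = 0].

(** Since [C] is diagonal and [C + D] is a generator with [D >= 0], every
    [C_ii] is negative, and the claim is the inequality
    [(sum pi_i a_i) (sum pi_i / a_i) >= (sum pi_i)^2 = 1] for the rates
    [a_i = - C_ii > 0].  Expanding the product as [sum_(i,j) pi_i pi_j a_i / a_j]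
    and pairing [(i,j)] with [(j,i)] reduces it to [x / y + y / x >= 2]. *)
From HB Require Import structures.
From mathcomp Require Import all_boot all_order all_algebra.
From mathcomp Require Import ring lra.
Import Order.TTheory GRing.Theory Num.Theory.
Set Implicit Arguments. Unset Strict Implicit. Unset Printing Implicit Defensive.
Local Open Scope ring_scope.

Lemma sqr_sum_le_mul_sum_div (R : realFieldType) (I : finType) (w a : I -> R) :
  (forall i, 0 <= w i) -> (forall i, 0 < a i) ->
  (\sum_i w i) ^+ 2 <= (\sum_i w i * a i) * (\sum_i w i / a i).
Proof.
move=> w_ge0 a_gt0.
pose T i j := w i * w j * (a i / a j) - w i * w j.
have sum_T : (\sum_i w i * a i) * (\sum_i w i / a i) - (\sum_i w i) ^+ 2
             = \sum_i \sum_j T i j.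
  rewrite expr2 !mulr_suml -sumrB; apply: eq_bigr => i _.
  rewrite !mulr_sumr -sumrB; apply: eq_bigr => j _; rewrite /T; ring.
have T_sym_ge0 i j : 0 <= T i j + T j i.
  have -> : T i j + T j i = w i * w j * ((a i - a j) ^+ 2 / (a i * a j)).
    by rewrite /T; field; rewrite !gt_eqF.
  apply: mulr_ge0; first exact: mulr_ge0.
  by rewrite divr_ge0 ?sqr_ge0 // ltW ?mulr_gt0.
have : 0 <= \sum_i \sum_j T i j + \sum_i \sum_j T i j.
  rewrite [X in _ + X]exchange_big -big_split; apply: sumr_ge0 => i _.
  by rewrite -big_split; apply: sumr_ge0 => j _; exact: T_sym_ge0.
by rewrite -sum_T; lra.
Qed.

Lemma generator_diag_le0 (R : realFieldType) (p : nat) (Q : 'M[R]_p) (i : 'I_p) :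
  is_generator Q -> Q i i <= 0.
Proof.
case=> Q_off_ge0 /(_ i); rewrite (bigD1 i) //= => /eqP; rewrite addr_eq0 => /eqP->.
by rewrite oppr_le0 sumr_ge0 // => j; rewrite eq_sym; apply: Q_off_ge0.
Qed.

Lemma unitmx_diag (F : fieldType) (n : nat) (d : 'rV[F]_n) :
  (diag_mx d \in unitmx) = [forall i, d 0 i != 0].
Proof.
rewrite unitmxE det_diag unitfE.
by apply/prodf_neq0/forallP => d_neq0 i => [|_]; apply: d_neq0.
Qed.

Lemma invmx_diag (F : fieldType) (n : nat) (d : 'rV[F]_n) :
  diag_mx d \in unitmx -> invmx (diag_mx d) = diag_mx (\row_i (d 0 i)^-1).
Proof.
move=> d_unit; have d_neq0 i : d 0 i != 0 by move: i; apply/forallP; rewrite -unitmx_diag.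
rewrite -[RHS]mul1mx -(mulVmx d_unit) -mulmxA mulmx_diag.
have -> : \row_j (d 0 j * (\row_i (d 0 i)^-1) 0 j) = const_mx 1.
  by apply/rowP => j; rewrite !mxE divff.
by rewrite diag_const_mx mulmx1.
Qed.

Lemma mul_diag_mx_ones (R : realFieldType) (p : nat) (u d : 'rV[R]_p) :
  (u *m diag_mx d *m ones R p) 0 0 = \sum_i u 0 i * d 0 i.
Proof. by rewrite mul_mx_diag mxE; apply: eq_bigr => i _; rewrite !mxE mulr1. Qed.

Theorem corollary1 (R : realFieldType) (p : nat) (C D : 'M[R]_p) (pi : 'rV[R]_p)
  (hMSPP : is_irreducible_MSPP C D)
  (hpi : is_stationary_dist (C + D) pi) :
  1 <= (pi *m C *m ones R p) 0 0 * (pi *m invmx C *m ones R p) 0 0.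
Proof.
case: hMSPP => [[D_ge0 _ Q_gen _ C_unit] /diag_mxP [d C_diag]].
case: hpi => [pi_ge0 pi_sum1 _].
have d_neq0 i : d 0 i != 0 by move: i; apply/forallP; rewrite -unitmx_diag -C_diag.
have d_lt0 i : d 0 i < 0.
  have := generator_diag_le0 i Q_gen; rewrite C_diag !mxE eqxx mulr1n.
  by have := D_ge0 i i; rewrite lt_neqAle d_neq0 /=; lra.
have C_inv : invmx C = diag_mx (\row_i (d 0 i)^-1).
  by rewrite C_diag invmx_diag // -C_diag.
rewrite C_inv C_diag !mul_diag_mx_ones -(expr1n R 2) -pi_sum1 -mulrNN -!sumrN.
under [X in _ <= X * _]eq_bigr do rewrite -mulrN.
under [X in _ <= _ * X]eq_bigr do rewrite mxE -mulrN -invrN.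
by apply: sqr_sum_le_mul_sum_div => // i; rewrite oppr_gt0.
Qed.
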